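(* Let $(L_*,b)$ and $(M_*,b)$ be chain complexes, $i:(L_*,b)\to(M_*,b)$ and $p:(M_*,b)\to(L_*,b)$ chain maps, and $h$ a map of degree $+1$ on $M_*$ with $ip=1+bh+hb$. Let $\delta$ be a small perturbation, put $A=(1-\delta h)^{-1}\delta$, and define $$i_\infty=i+hAi,\quad p_\infty=p+pAh,\quad h_\infty=h+hAh,\quad b_\infty=b+pAi.$$ Let $h'=p h_\infty i$ and $h''=p_\infty h i_\infty$. Then $$pi-1=bh'+h'b-(p i_\infty-1)(p_\infty i-1)$$ and $$p_\infty i_\infty-1=b_\infty h''+h''b_\infty-(p_\infty i-1)(p i_\infty-1).$$
   Context: Complexes are chain complexes of modules over a ring, with differentials of degree $-1$. A perturbation $\delta$ is a graded map $M_*\to M_*$ of the same degree as $b$ such that $(b+\delta)^2=0$. It is called small if $1-\delta h$ is invertible. It is known (homological perturbation lemma, HR version) that for a small perturbation, $(L_*,b_\infty)$ is a complex and that $i_\infty:(L_*,b_\infty)\to(M_*,b+\delta)$ and $p_\infty:(M_*,b+\delta)\to(L_*,b_\infty)$ are chain maps. *)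

From HB Require Import structures.
From mathcomp Require Import all_boot all_order all_algebra.
Set Implicit Arguments. Unset Strict Implicit. Unset Printing Implicit Defensive.
Import GRing.Theory.
Local Open Scope ring_scope.

(* A Z-graded module M = (+)_{n in Z} M_n over a ring R, presented by its
   total module together with the family of projections onto the homogeneous
   components M_n (orthogonal idempotents, every element being the finite sum
   of its components). *)
Record graded (R : pzRingType) (M : lmodType R) := Graded {
  gproj : int -> {linear M -> M};
  gproj_orth : forall n m (x : M),
    gproj n (gproj m x) = if n == m then gproj n x else 0;
  gproj_fin : forall x : M, exists s : seq int,
    uniq s /\ x = \sum_(n <- s) gproj n x /\
    (forall n, n \notin s -> gproj n x = 0)
}.

Definition graded_map (R : pzRingType) (M N : lmodType R)
  (gM : graded M) (gN : graded N) (d : int) (f : M -> N) : Prop :=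
  forall (n : int) (x : M), f (gproj gM n x) = gproj gN (n + d) (f x).

(* All that is used of A is
   (1 - delta h) A = delta = A (1 - h delta), and (b + delta)^2 = 0 then gives
   b A + A b + A i p A = 0.  From these, i_inf and p_inf are chain maps for
   b_inf and b + delta, and h_inf is a homotopy between i_inf p_inf and 1 for
   b + delta.  Both identities are instances of one computation: if i, p are
   chain maps, k is a homotopy between i' p' and 1 for a differential b + d,
   p d k i = p' i - p i and p k d i = p i' - p i, then
   p i - 1 = b K + K b - (p i' - 1)(p' i - 1) with K = p k i.  The first
   identity takes (i', p', k, d) = (i_inf, p_inf, h_inf, delta); the second
   applies it to the perturbed complexes with (i, p) and (i_inf, p_inf)
   exchanged and (k, d) = (h, - delta). *)

From HB Require Import structures.
From mathcomp Require Import all_boot all_order all_algebra.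
Import GRing.Theory.
Set Implicit Arguments.
Unset Strict Implicit.
Unset Printing Implicit Defensive.
Local Open Scope ring_scope.

Inductive zmod_term :=
  | ZVar of nat | ZZero | ZAdd of zmod_term & zmod_term | ZOpp of zmod_term.

Fixpoint zmod_eval (V : zmodType) (env : seq V) (t : zmod_term) : V :=
  match t with
  | ZVar n => env`_n
  | ZZero => 0
  | ZAdd t1 t2 => zmod_eval env t1 + zmod_eval env t2
  | ZOpp t1 => - zmod_eval env t1
  end.

Fixpoint zmod_coef (t : zmod_term) (k : nat) : int :=
  match t with
  | ZVar n => (n == k)%:Z
  | ZZero => 0
  | ZAdd t1 t2 => zmod_coef t1 k + zmod_coef t2 k
  | ZOpp t1 => - zmod_coef t1 k
  end.

Lemma zmod_eval_coef (V : zmodType) (env : seq V) t :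
  zmod_eval env t = \sum_(k < size env) env`_k *~ zmod_coef t k.
Proof.
elim: t => [n||t1 IH1 t2 IH2|t1 IH1] /=.
- have [n_lt|n_ge] := ltnP n (size env); last first.
    rewrite nth_default // big1 // => k _.
    case: eqP => [n_k|]; last by rewrite mulr0z.
    by have := ltn_ord k; rewrite -n_k ltnNge n_ge.
  rewrite (bigD1 (Ordinal n_lt)) //= eqxx mulr1z big1 ?addr0 // => k.
  by rewrite -val_eqE eq_sym => /negbTE /= ->; rewrite mulr0z.
- by rewrite big1 // => k _; rewrite mulr0z.
- by rewrite IH1 IH2 -big_split; apply: eq_bigr => k _; rewrite mulrzDr.
- by rewrite IH1 -sumrN; apply: eq_bigr => k _; rewrite mulrNz.
Qed.

Lemma zmod_eval_eq (V : zmodType) (env : seq V) t1 t2 :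
  all (fun k => zmod_coef t1 k == zmod_coef t2 k) (iota 0 (size env)) ->
  zmod_eval env t1 = zmod_eval env t2.
Proof.
move=> /allP coefE; rewrite !zmod_eval_coef; apply: eq_bigr => k _.
by rewrite (eqP (coefE k _)) // mem_iota /=.
Qed.

(* Atoms are identified up to conversion, so differently elaborated copies of
   the same application (e.g. through [{linear}] and [{additive}] coercions)
   count as one atom. *)
Ltac zmod_index x env :=
  lazymatch env with
  | ?y :: ?env' =>
      match constr:(tt) with
      | _ => let _ := match goal with _ => unify x y end in
             let n := eval compute in (size env') in constr:(n)
      | _ => zmod_index x env'
      end
  end.

Ltac zmod_reify x env :=
  lazymatch x with
  | GRing.add ?x1 ?x2 =>
      lazymatch zmod_reify x1 env with (?t1, ?env1) =>
      lazymatch zmod_reify x2 env1 with (?t2, ?env2) =>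
        constr:((ZAdd t1 t2, env2)) end end
  | GRing.opp ?x1 =>
      lazymatch zmod_reify x1 env with (?t1, ?env1) =>
        constr:((ZOpp t1, env1)) end
  | GRing.zero => constr:((ZZero, env))
  | _ =>
      match constr:(tt) with
      | _ => let n := zmod_index x env in constr:((ZVar n, env))
      | _ => let n := eval compute in (size env) in constr:((ZVar n, x :: env))
      end
  end.

Ltac abel :=
  lazymatch goal with
  | |- @eq ?V ?l ?r =>
      lazymatch zmod_reify l (@nil V) with (?tl, ?env1) =>
      lazymatch zmod_reify r env1 with (?tr, ?env2) =>
        let env := eval cbv [rev catrev] in (rev env2) in
        change (zmod_eval env tl = zmod_eval env tr);
        apply: zmod_eval_eq; vm_compute; reflexivity
      end end
  end.

Lemma homotopy_defect (L M : zmodType) (bL : L -> L) (bM d k : M -> M)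
    (i i' : {additive L -> M}) (p : {additive M -> L}) (p' : M -> L) :
  (forall x, bM (i x) = i (bL x)) -> (forall y, bL (p y) = p (bM y)) ->
  (forall y, bM (k y) + k (bM y) + (d (k y) + k (d y)) = i' (p' y) - y) ->
  (forall x, p (d (k (i x))) = p' (i x) - p (i x)) ->
  (forall x, p (k (d (i x))) = p (i' x) - p (i x)) ->
  forall x, p (i x) - x
    = bL (p (k (i x))) + p (k (i (bL x)))
      - (p (i' (p' (i x) - x)) - (p' (i x) - x)).
Proof.
move=> i_chain p_chain k_homotopy dk_eq kd_eq x.
rewrite p_chain -i_chain -raddfD (canRL (addrK _) (k_homotopy _)).
by rewrite (raddfB i') !(raddfB p) raddfD dk_eq kd_eq; abel.
Qed.

Section Perturbation.

Variables (L M : zmodType) (bL : {additive L -> L}).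
Variables (b h delta A : {additive M -> M}).
Variables (i : {additive L -> M}) (p : {additive M -> L}).

Hypothesis i_chain : forall x, b (i x) = i (bL x).
Hypothesis p_chain : forall y, bL (p y) = p (b y).
Hypothesis ip_homotopy : forall y, i (p y) = y + b (h y) + h (b y).
Hypothesis delta_perturbation :
  forall y, b (delta y) + delta (b y) + delta (delta y) = 0.
(* [A] stands for (1 - delta h)^-1 delta = delta (1 - h delta)^-1. *)
Hypothesis A_left : forall y, A y = delta y + delta (h (A y)).
Hypothesis A_right : forall y, A y = delta y + A (h (delta y)).

Definition i_inf : {additive L -> M} := i \+ (h \o A \o i).
Definition p_inf : {additive M -> L} := p \+ (p \o A \o h).
Definition h_inf : {additive M -> M} := h \+ (h \o A \o h).
Definition b_inf : {additive L -> L} := bL \+ (p \o A \o i).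

Lemma delta_h_fixed z : z = delta (h z) -> z = 0.
Proof.
move=> zE; rewrite zE; apply/eqP.
(* A_right at [h z] reads [A (h z) = z + A (h z)]. *)
by have /eqP := A_right (h z); rewrite -zE -subr_eq subrr eq_sym.
Qed.

Lemma bA_Ab y : b (A y) + A (b y) + A (i (p (A y))) = 0.
Proof.
set a := A y; apply: delta_h_fixed; apply/eqP; rewrite -subr_eq0; apply/eqP.
have -> : b a + A (b y) + A (i (p a)) - delta (h (b a + A (b y) + A (i (p a))))
    = b a + delta (b y) + delta a + delta (b (h a)).
  by rewrite {1}[A (b y)]A_left {1}[A (i _)]A_left ip_homotopy !raddfD /=; abel.
have -> : b a + delta (b y) + delta a + delta (b (h a))
    = (b (delta y) + delta (b y) + delta (delta y))
      + (b (delta (h a)) + delta (b (h a)) + delta (delta (h a))).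
  by rewrite {1 2}/a A_left !raddfD; abel.
by rewrite !delta_perturbation addr0.
Qed.

Lemma AbE y : A (b y) = - b (A y) - A (i (p (A y))).
Proof. by rewrite -[LHS]subr0 -(bA_Ab y); abel. Qed.

Lemma bhE y : b (h y) = i (p y) - y - h (b y).
Proof. by rewrite ip_homotopy; abel. Qed.

Lemma hbE y : h (b y) = i (p y) - y - b (h y).
Proof. by rewrite ip_homotopy; abel. Qed.

Lemma delta_i_inf x : delta (i_inf x) = A (i x).
Proof. by rewrite /= raddfD -A_left. Qed.

Lemma delta_h_inf y : delta (h_inf y) = A (h y).
Proof. by rewrite /= raddfD -A_left. Qed.

Lemma h_inf_delta y : h_inf (delta y) = h (A y).
Proof. by rewrite /= -raddfD -A_right. Qed.

Lemma p_inf_delta y : p_inf (delta y) = p (A y).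
Proof. by rewrite /= -raddfD -A_right. Qed.

Lemma i_inf_chain x : b (i_inf x) + delta (i_inf x) = i_inf (b_inf x).
Proof.
rewrite delta_i_inf /= !raddfD -i_chain AbE [b (h _)]bhE.
by rewrite raddfB raddfN /=; abel.
Qed.

Lemma p_inf_chain y : b_inf (p_inf y) = p_inf (b y + delta y).
Proof.
rewrite raddfD p_inf_delta /= !raddfD !p_chain [i (p y)]ip_homotopy.
rewrite !raddfD AbE.
by rewrite raddfB raddfN /=; abel.
Qed.

Lemma h_inf_homotopy y :
  b (h_inf y) + h_inf (b y) + (delta (h_inf y) + h_inf (delta y))
  = i_inf (p_inf y) - y.
Proof.
rewrite delta_h_inf h_inf_delta /= !raddfD [b (h (A _))]bhE [h (b y)]hbE.
by rewrite !raddfB AbE raddfB raddfN /=; abel.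
Qed.

Lemma pi_defect x :
  p (i x) - x
  = bL (p (h_inf (i x))) + p (h_inf (i (bL x)))
    - (p (i_inf (p_inf (i x) - x)) - (p_inf (i x) - x)).
Proof.
apply: (homotopy_defect i_chain p_chain h_inf_homotopy) => {}x.
  by rewrite delta_h_inf /=; abel.
by rewrite h_inf_delta /= raddfD; abel.
Qed.

(* (M, b + delta) perturbed by [- delta] is (M, b), with homotopy [h]. *)
Lemma pi_inf_defect x :
  p_inf (i_inf x) - x
  = b_inf (p_inf (h (i_inf x))) + p_inf (h (i_inf (b_inf x)))
    - (p_inf (i (p (i_inf x) - x)) - (p (i_inf x) - x)).
Proof.
apply: (homotopy_defect (d := \- delta) i_inf_chain p_inf_chain) => {}x.
- by rewrite /= raddfD raddfN ip_homotopy; abel.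
- by rewrite raddfN p_inf_delta /=; abel.
- by rewrite !raddfN delta_i_inf /= !raddfD /=; abel.
Qed.

End Perturbation.

Theorem lemma1p9 (R : pzRingType) (L M : lmodType R)
  (gL : graded L) (gM : graded M)
  (bL : {linear L -> L}) (bM : {linear M -> M})
  (i : {linear L -> M}) (p : {linear M -> L}) (h : {linear M -> M})
  (delta : {linear M -> M}) (u : M -> M)
  (* (L_*, b) and (M_*, b) are chain complexes (differentials of degree -1) *)
  (hbL_deg : graded_map gL gL (-1) bL) (hbL2 : forall x, bL (bL x) = 0)
  (hbM_deg : graded_map gM gM (-1) bM) (hbM2 : forall x, bM (bM x) = 0)
  (* i and p are chain maps *)
  (hi_deg : graded_map gL gM 0 i) (hi_chain : forall x, bM (i x) = i (bL x))
  (hp_deg : graded_map gM gL 0 p) (hp_chain : forall x, bL (p x) = p (bM x))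
  (* h has degree +1 and ip = 1 + bh + hb *)
  (hh_deg : graded_map gM gM 1 h)
  (hiph : forall x, i (p x) = x + bM (h x) + h (bM x))
  (* delta is a perturbation: same degree as b, (b + delta)^2 = 0 *)
  (hdelta_deg : graded_map gM gM (-1) delta)
  (hdelta2 : forall x, (bM (bM x + delta x)) + delta (bM x + delta x) = 0)
  (* delta is small: u is a two-sided inverse of 1 - delta h *)
  (hu_l : forall x, u (x - delta (h x)) = x)
  (hu_r : forall x, u x - delta (h (u x)) = x) :
  let A := fun x => u (delta x) in
  let i_inf := fun x => i x + h (A (i x)) in
  let p_inf := fun x => p x + p (A (h x)) in
  let h_inf := fun x => h x + h (A (h x)) in
  let b_inf := fun x => bL x + p (A (i x)) in
  let h' := fun x => p (h_inf (i x)) in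
  let h'' := fun x => p_inf (h (i_inf x)) in
  (forall x : L,
     p (i x) - x
     = bL (h' x) + h' (bL x)
       - (p (i_inf (p_inf (i x) - x)) - (p_inf (i x) - x))) /\
  (forall x : L,
     p_inf (i_inf x) - x
     = b_inf (h'' x) + h'' (b_inf x)
       - (p_inf (i (p (i_inf x) - x)) - (p (i_inf x) - x))).
Proof.
move=> A i_inf p_inf h_inf b_inf h' h''.
have u_zmod : zmod_morphism u :=
  can2_zmod_morphism (f := idfun \- (delta \o h)) hu_l hu_r.
pose U : {additive M -> M} :=
  HB.pack u (GRing.isZmodMorphism.Build M M u u_zmod).
have delta_perturbation y : bM (delta y) + delta (bM y) + delta (delta y) = 0.
  by rewrite -(hdelta2 y) !linearD hbM2 add0r addrA.
have A_left y : (U \o delta) y = delta y + delta (h ((U \o delta) y)).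
  by apply/eqP; rewrite -subr_eq hu_r.
have A_right y : (U \o delta) y = delta y + (U \o delta) (h (delta y)).
  by apply/eqP; rewrite /= -subr_eq -u_zmod hu_l.
split=> x.
  exact: (pi_defect hi_chain hp_chain hiph delta_perturbation A_left A_right).
exact: (pi_inf_defect hi_chain hp_chain hiph delta_perturbation A_left A_right).
Qed.
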